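(* Let $S=\{x\in\mathbb{R}^n\mid h_i^Tx\le b_i,\ i=1,\dots,r\}$ be a polyhedron, let $q:\mathbb{R}^{n\times n}\to\mathbb{R}$ be a strictly convex quadratic function and $U_0=\{A\in\mathbb{R}^{n\times n}\mid q(A)\le 0\}$, let $A_\star\in U_0$, let $x_1,\dots,x_k\in\mathbb{R}^n$, let $U_k=\{A\in U_0\mid Ax_j=A_\star x_j,\ A^2x_j=A_\star^2x_j,\ j=1,\dots,k\}$, and let $c\in\mathbb{R}^n$. Then the problem $$\min_{x\in\mathbb{R}^n} c^Tx\quad\text{s.t. } x\in S,\quad Ax\in S\ \ \forall A\in U_k,\quad A^2x\in S\ \ \forall A\in U_k$$ can be reformulated as a semidefinite program involving $3r$ scalar inequalities and $2r$ positive semidefinite constraints on matrices of size at most $(n^2+1)\times(n^2+1)$.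
   Context: Setting: the unknown linear system $x_{t+1}=A_\star x_t$ with ellipsoidal uncertainty set $U_0$; the data are $k$ observed length-two trajectories $(x_j,A_\star x_j,A_\star^2x_j)$. The feasible set of the displayed problem is the set of points that remain in $S$ for two steps under every matrix consistent with $U_0$ and the data. *)

From HB Require Import structures.
From mathcomp Require Import all_boot all_order all_algebra.
From mathcomp Require Import reals.
Set Implicit Arguments. Unset Strict Implicit. Unset Printing Implicit Defensive.
Import Order.TTheory GRing.Theory Num.Theory.
Local Open Scope ring_scope.

Section Defs.
Variable R : realType.

Definition in_poly (n r : nat) (h : 'I_r -> 'cV[R]_n) (b : 'I_r -> R)
    (x : 'cV[R]_n) : Prop :=
  forall i : 'I_r, ((h i)^T *m x) 0 0 <= b i.

Definition quad_fun (n : nat) (Q : 'M[R]_(n * n)) (p : 'cV[R]_(n * n)) (s : R)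
    (A : 'M[R]_n) : R :=
  (mxvec A *m Q *m (mxvec A)^T) 0 0 + (mxvec A *m p) 0 0 + s.

(* Strict convexity of quad_fun Q p s: positive definite quadratic part. *)
Definition pos_def (m : nat) (Q : 'M[R]_m) : Prop :=
  forall v : 'rV[R]_m, v != 0 -> 0 < (v *m Q *m v^T) 0 0.

Definition in_Uk (n k : nat) (q : 'M[R]_n -> R) (Astar : 'M[R]_n)
    (xs : 'I_k -> 'cV[R]_n) (A : 'M[R]_n) : Prop :=
  q A <= 0 /\
  forall j : 'I_k, A *m xs j = Astar *m xs j /\
                   A *m (A *m xs j) = Astar *m (Astar *m xs j).

Definition robust_feasible (n r k : nat) (h : 'I_r -> 'cV[R]_n) (b : 'I_r -> R)
    (q : 'M[R]_n -> R) (Astar : 'M[R]_n) (xs : 'I_k -> 'cV[R]_n)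
    (x : 'cV[R]_n) : Prop :=
  in_poly h b x /\
  forall A : 'M[R]_n, in_Uk q Astar xs A ->
    in_poly h b (A *m x) /\ in_poly h b (A *m (A *m x)).

Definition psd (m : nat) (M : 'M[R]_m) : Prop :=
  M^T = M /\ forall v : 'cV[R]_m, 0 <= (v^T *m M *m v) 0 0.

(* A semidefinite program in the variables (x, y), x : 'cV_n, y : 'cV_N
   (N auxiliary variables), with nineq scalar affine inequalities and
   nlmi linear matrix inequalities, the j-th one of size sdp_m j. *)
Record SDP (n nineq nlmi : nat) := {
  sdp_N : nat;
  sdp_m : 'I_nlmi -> nat;
  sdp_ax : 'I_nineq -> 'rV[R]_n;
  sdp_ay : 'I_nineq -> 'rV[R]_sdp_N;
  sdp_e : 'I_nineq -> R;
  sdp_F0 : forall j : 'I_nlmi, 'M[R]_(sdp_m j);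
  sdp_Fx : forall j : 'I_nlmi, 'I_n -> 'M[R]_(sdp_m j);
  sdp_Fy : forall j : 'I_nlmi, 'I_sdp_N -> 'M[R]_(sdp_m j);
  sdp_cx : 'rV[R]_n;     (* objective: sdp_cx x + sdp_cy y *)
  sdp_cy : 'rV[R]_sdp_N
}.

Arguments sdp_F0 {n nineq nlmi} s j : rename.
Arguments sdp_Fx {n nineq nlmi} s j k : rename.
Arguments sdp_Fy {n nineq nlmi} s j l : rename.
Arguments sdp_ax {n nineq nlmi} s i : rename.
Arguments sdp_ay {n nineq nlmi} s i : rename.
Arguments sdp_e {n nineq nlmi} s i : rename.
Arguments sdp_m {n nineq nlmi} s j : rename.

Definition sdp_lmi n nineq nlmi (P : SDP n nineq nlmi) (j : 'I_nlmi)
    (x : 'cV[R]_n) (y : 'cV[R]_(sdp_N P)) : 'M[R]_(sdp_m P j) :=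
  sdp_F0 P j + \sum_(k < n) x k 0 *: sdp_Fx P j k
             + \sum_(l < sdp_N P) y l 0 *: sdp_Fy P j l.

Definition sdp_feasible n nineq nlmi (P : SDP n nineq nlmi)
    (x : 'cV[R]_n) (y : 'cV[R]_(sdp_N P)) : Prop :=
  (forall i : 'I_nineq, (sdp_ax P i *m x) 0 0 + (sdp_ay P i *m y) 0 0 <= sdp_e P i)
  /\ (forall j : 'I_nlmi, psd (@sdp_lmi _ _ _ P j x y)).

Definition sdp_reformulates n nineq nlmi (P : SDP n nineq nlmi)
    (c : 'cV[R]_n) (F : 'cV[R]_n -> Prop) : Prop :=
  sdp_cx P = c^T /\ sdp_cy P = 0 /\
  forall x : 'cV[R]_n, F x <-> exists y, @sdp_feasible _ _ _ P x y.

End Defs.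

From HB Require Import structures.
From mathcomp Require Import all_boot all_order all_algebra.
From mathcomp Require Import reals.
From mathcomp Require Import boolp classical_sets.
From mathcomp Require Import ring lra.
Import Order.TTheory GRing.Theory Num.Theory.
Set Implicit Arguments. Unset Strict Implicit. Unset Printing Implicit Defensive.
Local Open Scope ring_scope.

(* The conditions A x_j = A⋆ x_j and A² x_j = A⋆² x_j amount to the linear conditions
   (A - A⋆) x_j = (A - A⋆) A⋆ x_j = 0, so U_k is the sublevel set {q <= 0} of q on an
   affine subspace through A⋆. Parametrising it by z and homogenising with one extra
   coordinate t, each robust constraint (h_i^T A x <= b_i, or h_i^T A² x <= b_i, for all
   A in U_k) says that a quadratic form F(x) in v = (t, z), affine in x, is nonnegative
   wherever t = 1 and the homogenisation q̂ of q is nonpositive. As q is strictly convex,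
   q̂ is nonnegative on {t = 0}. If q̂ takes a negative value at some point with t = 1,
   the S-lemma turns each robust constraint into the LMI F(x) + λ q̂ ⪰ 0 with λ >= 0,
   of size n² + 1. Otherwise strict convexity forces U_k = {A⋆} and the robust constraints
   are 3r linear inequalities. *)

Section QuadraticForms.
Variables (R : comPzRingType) (m : nat).
Implicit Types (M : 'M[R]_m) (u v w : 'cV[R]_m).

Definition qform M v : R := (v^T *m M *m v) 0 0.
Definition bform M u w : R := (u^T *m M *m w) 0 0.

Lemma qform_comb M u w a c :
  qform M (a *: u + c *: w) =
  a ^+ 2 * qform M u + a * c * (bform M u w + bform M w u) + c ^+ 2 * qform M w.
Proof.
rewrite /qform /bform [(_ + _)^T]linearD /= ![(_ *: _)^T]linearZ /=.
rewrite !(mulmxDl, mulmxDr) -!(scalemxAl, scalemxAr) !mxE.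
ring.
Qed.

Lemma qformZv M a v : qform M (a *: v) = a ^+ 2 * qform M v.
Proof. by have := qform_comb M v 0 a 0; rewrite !scale0r !addr0 => ->; ring. Qed.

Lemma qformD M1 M2 v : qform (M1 + M2) v = qform M1 v + qform M2 v.
Proof. by rewrite /qform mulmxDr mulmxDl mxE. Qed.

Lemma qformZ c M v : qform (c *: M) v = c * qform M v.
Proof. by rewrite /qform -scalemxAr -scalemxAl mxE. Qed.

Lemma qformN M v : qform (- M) v = - qform M v.
Proof. by rewrite -scaleN1r qformZ mulN1r. Qed.

Lemma qform_sum I (s : seq I) (P : pred I) (F : I -> 'M[R]_m) v :
  qform (\sum_(i <- s | P i) F i) v = \sum_(i <- s | P i) qform (F i) v.
Proof.
elim/big_rec2: _ => [|i a M _ <-]; last by rewrite qformD.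
by rewrite /qform mulmx0 mul0mx mxE.
Qed.

Lemma qform_tr M v : qform M^T v = qform M v.
Proof.
rewrite /qform.
have -> : v^T *m M^T *m v = (v^T *m M *m v)^T by rewrite !trmx_mul trmxK mulmxA.
by rewrite mxE.
Qed.

Lemma qform_mul_tr u w v : qform (u *m w^T) v = (v^T *m u) 0 0 * (v^T *m w) 0 0.
Proof.
rewrite /qform !mulmxA -(mulmxA _ w^T) [in LHS]mxE big_ord1.
by rewrite -[w^T *m v]trmxK trmx_mul trmxK [(_^T) _ _]mxE.
Qed.

End QuadraticForms.

Lemma qform_conj (R : comPzRingType) m n (W : 'M[R]_(m, n)) (M : 'M[R]_n) v :
  qform (W *m M *m W^T) v = qform M (W^T *m v).
Proof. by rewrite /qform trmx_mul trmxK !mulmxA. Qed.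

Section Symmetrization.
Variables (R : numFieldType) (m : nat).
Implicit Types (M : 'M[R]_m).

Definition symmx M := 2^-1 *: (M + M^T).

Lemma trmx_symmx M : (symmx M)^T = symmx M.
Proof. by rewrite /symmx linearZ /= linearD /= trmxK addrC. Qed.

Lemma qform_symmx M v : qform (symmx M) v = qform M v.
Proof. by rewrite qformZ qformD qform_tr; field. Qed.

End Symmetrization.

Lemma ge0_at_roots (R : rcfType) (a b c f2 f1 f0 : R) :
  0 < a -> c < 0 ->
  (forall t, t ^+ 2 * a + t * b + c = 0 -> 0 <= t ^+ 2 * f2 + t * f1 + f0) ->
  0 <= f2 * - c + f0 * a.
Proof.
move=> a_gt0 c_lt0 hf.
have a_neq0 : a != 0 by rewrite gt_eqF.
have disc_gt0 : 0 < - (4 * a * c) by rewrite -mulrN mulr_gt0 ?oppr_gt0 // mulr_gt0.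
set D := Num.sqrt (b ^+ 2 - 4 * a * c).
have D2 : D ^+ 2 = b ^+ 2 - 4 * a * c by rewrite sqr_sqrtr // addr_ge0 ?sqr_ge0 ?ltW.
have /andP[Db bD] : - D < b < D.
  by rewrite -ltr_norml -sqrtr_sqr ltr_sqrt ?ltrDl // (lt_le_trans disc_gt0) ?lerDr ?sqr_ge0.
have root d : d ^+ 2 = D ^+ 2 ->
    ((- b + d) / (2 * a)) ^+ 2 * a + (- b + d) / (2 * a) * b + c = 0.
  move=> d2; have -> : ((- b + d) / (2 * a)) ^+ 2 * a + (- b + d) / (2 * a) * b + c =
    (d ^+ 2 - (b ^+ 2 - 4 * a * c)) / (4 * a) by field.
  by rewrite d2 D2 subrr mul0r.
set t1 := (- b + D) / (2 * a); set t2 := (- b - D) / (2 * a).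
have t1_gt0 : 0 < t1 by rewrite divr_gt0 ?mulr_gt0 //; lra.
have t2_lt0 : t2 < 0 by rewrite pmulr_llt0 ?invr_gt0 ?mulr_gt0 //; lra.
have vieta : t1 * t2 = c / a.
  rewrite /t1 /t2; have -> : c = (b ^+ 2 - D ^+ 2) / (4 * a) by rewrite D2; field.
  by field.
(* t1 f(t2) - t2 f(t1) = (t1 - t2) (f0 - f2 t1 t2), where f(t1), f(t2) >= 0 *)
have mt2_ge0 : 0 <= - t2 by rewrite oppr_ge0 ltW.
have := addr_ge0 (mulr_ge0 (ltW t1_gt0) (hf t2 (root _ (sqrrN D))))
                 (mulr_ge0 mt2_ge0 (hf t1 (root _ erefl))).
have -> : t1 * (t2 ^+ 2 * f2 + t2 * f1 + f0) + - t2 * (t1 ^+ 2 * f2 + t1 * f1 + f0)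
    = (t1 - t2) * (f0 - f2 * (t1 * t2)) by ring.
rewrite vieta pmulr_rge0 ?subr_gt0 ?(lt_trans t2_lt0) // => hge0.
have -> : f2 * - c + f0 * a = a * (f0 - f2 * (c / a)) by field.
exact: mulr_ge0 (ltW a_gt0) hge0.
Qed.

Section SLemma.
Variables (R : realType) (m : nat) (F G : 'M[R]_m).
Hypothesis FG : forall v, qform G v <= 0 -> 0 <= qform F v.
Variable v0 : 'cV[R]_m.
Hypothesis Gv0 : qform G v0 < 0.

(* G changes sign on the line t v1 + v2, and F is nonnegative at the two zeros of G there. *)
Lemma slemma_two_point v1 v2 : 0 < qform G v1 -> qform G v2 < 0 ->
  0 <= qform F v1 * - qform G v2 + qform F v2 * qform G v1.
Proof.
move=> Gv1 Gv2; apply: (ge0_at_roots (b := bform G v1 v2 + bform G v2 v1)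
  (f1 := bform F v1 v2 + bform F v2 v1) Gv1 Gv2) => t Gt.
by have := @FG (t *: v1 + 1 *: v2); rewrite !qform_comb !mulr1 expr1n !mul1r Gt lexx => ->.
Qed.

Let ratios := [set - qform F v / qform G v | v in [set v | 0 < qform G v]]%classic.

(* F + λ G is positive semidefinite only if λ >= - F(v) / G(v) whenever G(v) > 0. *)
Definition slemma_mult : R := Num.max 0 (sup ratios).

Lemma slemma_mult_ge0 : 0 <= slemma_mult.
Proof. by rewrite le_max lexx. Qed.

Lemma slemma_ratio_ub v2 : qform G v2 < 0 ->
  ubound ratios (qform F v2 / - qform G v2).
Proof.
move=> Gv2 _ [v1 /= Gv1 <-]; rewrite -subr_ge0.
have -> : qform F v2 / - qform G v2 - - qform F v1 / qform G v1 =
    (qform F v1 * - qform G v2 + qform F v2 * qform G v1) / (qform G v1 * - qform G v2).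
  by field; rewrite lt_eqF // gt_eqF.
by rewrite divr_ge0 ?slemma_two_point // mulr_ge0 // ltW // oppr_gt0.
Qed.

Lemma slemma_mult_le v : qform G v < 0 -> slemma_mult <= qform F v / - qform G v.
Proof.
move=> Gv; have mGv : 0 < - qform G v by rewrite oppr_gt0.
have ratio_ge0 : 0 <= qform F v / - qform G v by rewrite divr_ge0 ?FG // ltW.
rewrite ge_max ratio_ge0 /=.
have [[x Ex]|E0] := pselect (ratios !=set0)%classic.
  by apply: ge_sup; [exists x | exact: slemma_ratio_ub].
by rewrite sup_out // => -[[x Ex] _]; apply: E0; exists x.
Qed.

Lemma slemma_mult_ge v : 0 < qform G v -> - qform F v / qform G v <= slemma_mult.
Proof.
move=> Gv; rewrite le_max; apply/orP; right.
by apply: ub_le_sup; [exists (qform F v0 / - qform G v0); exact: slemma_ratio_ub | exists v].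
Qed.

Theorem slemma v : 0 <= qform F v + slemma_mult * qform G v.
Proof.
have [Gv|Gv|G0] := ltrgtP (qform G v) 0; last by rewrite G0 mulr0 addr0 FG ?G0.
- have := slemma_mult_le Gv; rewrite ler_pdivlMr ?oppr_gt0 //; lra.
- have := slemma_mult_ge Gv; rewrite ler_pdivrMr //; lra.
Qed.

End SLemma.

Lemma ge0_quadratic_lead (R : realFieldType) (a b c : R) :
  (forall s : R, 0 <= s -> 0 <= a + b * s + c * s ^+ 2) -> 0 <= c.
Proof.
move=> H; rewrite leNgt; apply/negP => c_lt0.
have ab_ge0 : 0 <= `|a| + `|b| by rewrite addr_ge0.
(* for s >= 1, a + b s + c s^2 <= s (|a| + |b| + c s), and c s = c - |a| - |b| here *)
set s := (`|a| + `|b|) / - c + 1.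
have s_ge1 : 1 <= s by rewrite lerDr divr_ge0 // oppr_ge0 ltW.
have cs : c * s = - (`|a| + `|b|) + c.
  by rewrite /s; field; rewrite lt_eqF.
have := H s (le_trans ler01 s_ge1).
have := ler_norm a; have := ler_norm b; have := normr_ge0 a; have := normr_ge0 b.
have : b * s <= `|b| * s by rewrite ler_wpM2r ?ler_norm // (le_trans ler01 s_ge1).
have : `|a| <= `|a| * s by rewrite ler_peMr.
rewrite expr2 mulrA cs; nra.
Qed.

Section Homogenization.
Variables (R : realFieldType) (m : nat) (F G : 'M[R]_m.+1).
Implicit Types v : 'cV[R]_m.+1.
Hypothesis FG1 : forall v, v ord0 0 = 1 -> qform G v <= 0 -> 0 <= qform F v.
Hypothesis G_ge0_infty : forall v, v ord0 0 = 0 -> 0 <= qform G v.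
Variable v0 : 'cV[R]_m.+1.
Hypotheses (v0_1 : v0 ord0 0 = 1) (Gv0 : qform G v0 < 0).

Lemma slemma_homogenize_infty v : v ord0 0 = 0 -> qform G v <= 0 -> 0 <= qform F v.
Proof.
move=> v_0 Gv_le0; have Gv : qform G v = 0 by apply/eqP; rewrite eq_le Gv_le0 G_ge0_infty.
set g := bform G v0 v + bform G v v0.
have [e [e2 eg]] : exists e : R, e ^+ 2 = 1 /\ e * g <= 0.
  case: (lerP g 0) => g0; first by exists 1; rewrite mul1r expr1n.
  by exists (-1); rewrite sqrrN expr1n mulN1r oppr_le0 ltW.
(* G < 0 on the half-line v0 + s e v (s >= 0), where F has leading coefficient F(v). *)
apply: (@ge0_quadratic_lead _ (qform F v0) (e * (bform F v0 v + bform F v v0))) => s s_ge0.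
have w_1 : (1 *: v0 + (s * e) *: v) ord0 0 = 1 by rewrite !mxE v0_1 v_0 mulr0 addr0 mulr1.
have Gw : qform G (1 *: v0 + (s * e) *: v) <= 0.
  rewrite qform_comb Gv mulr0 addr0 expr1n !mul1r -/g -mulrA.
  exact/ltW/ltr_wnDr/Gv0/mulr_ge0_le0.
have := FG1 w_1 Gw; rewrite qform_comb exprMn e2 mulr1 expr1n.
by congr (0 <= _); ring.
Qed.

Lemma slemma_homogenize v : qform G v <= 0 -> 0 <= qform F v.
Proof.
have [v_0|v_n0] := eqVneq (v ord0 0) 0; first exact: slemma_homogenize_infty.
have w_1 : ((v ord0 0)^-1 *: v) ord0 0 = 1 by rewrite mxE mulVf.
move=> Gv; have := FG1 w_1; rewrite !qformZv pmulr_rge0 ?exprn_even_gt0 ?invr_eq0 //.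
by apply; rewrite pmulr_rle0 ?exprn_even_gt0 ?invr_eq0.
Qed.

End Homogenization.

Section FormMatrices.
Variables (R : comPzRingType) (N : nat).
Implicit Types (u w : 'rV[R]_N).

Definition lin_form_col (f : 'rV[R]_N -> R) : 'cV[R]_N := \col_a f (delta_mx 0 a).

Lemma lin_form_colE f : scalar f -> forall u, f u = (u *m lin_form_col f) 0 0.
Proof.
move=> f_lin u; rewrite [in LHS](row_sum_delta u) mxE.
have f0 : f 0 = 0.
  by have := f_lin 1 0 0; rewrite scaler0 addr0 mul1r -{1}[f 0]addr0 => /addrI.
apply: (big_rec2 (fun M a => f M = a)) => [|j M a _ <-] //.
by rewrite f_lin !mxE mulrC.
Qed.

Definition bilin_form_mx (f : 'rV[R]_N -> 'rV[R]_N -> R) : 'M[R]_N :=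
  \matrix_(a, b) f (delta_mx 0 a) (delta_mx 0 b).

Lemma bilin_form_mxE f :
  (forall w, scalar (f^~ w)) -> (forall u, scalar (f u)) ->
  forall u w, f u w = (u *m bilin_form_mx f *m w^T) 0 0.
Proof.
move=> f_linl f_linr u w; rewrite -mulmxA (lin_form_colE (f_linl w)).
congr ((u *m _) 0 0); apply/matrixP => a i; rewrite (ord1 i) !mxE (lin_form_colE (f_linr _)) mxE.
by apply: eq_bigr => b _; rewrite !mxE mulrC.
Qed.

End FormMatrices.

Section DataSubspace.
Variables (R : fieldType) (n k : nat) (Astar : 'M[R]_n) (xs : 'I_k -> 'cV[R]_n).
Implicit Types (D : 'M[R]_n) (v : 'cV[R]_((n * n).+1)).

Definition obs_mx : 'M[R]_(n, k) := \matrix_(a, j) xs j a 0.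

Definition data_mx : 'M[R]_(n, k + k) := row_mx obs_mx (Astar *m obs_mx).

Lemma mul_obs_mx_eq0 D : D *m obs_mx = 0 <-> forall j, D *m xs j = 0.
Proof.
have DxE a j : (D *m obs_mx) a j = (D *m xs j) a 0.
  by rewrite !mxE; apply: eq_bigr => c _; rewrite mxE.
split=> [DX j | Dx]; apply/matrixP => a j'.
  by rewrite (ord1 j') -DxE DX !mxE.
by rewrite DxE Dx !mxE.
Qed.

Lemma mul_data_mx_eq0 D :
  D *m data_mx = 0 <-> forall j, D *m xs j = 0 /\ D *m (Astar *m xs j) = 0.
Proof.
rewrite mul_mx_row; split=> [/eqP | DX].
  rewrite row_mx_eq0 => /andP[/eqP/mul_obs_mx_eq0 Dx /eqP]; rewrite mulmxA.
  by move/mul_obs_mx_eq0 => DAx j; rewrite mulmxA.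
have -> : D *m obs_mx = 0 by apply/mul_obs_mx_eq0 => j; case: (DX j).
have -> : D *m (Astar *m obs_mx) = 0.
  by rewrite mulmxA; apply/mul_obs_mx_eq0 => j; rewrite -mulmxA; case: (DX j).
exact: row_mx0.
Qed.

Definition ker_data : 'M[R]_(n * n) := kermx (lin_mx (mulmxr data_mx)).

Lemma mxvec_ker_data D : (mxvec D <= ker_data)%MS = (D *m data_mx == 0).
Proof. by rewrite sub_kermx mul_vec_lin mxvec_eq0. Qed.

(* Coordinate 0 of v : 'cV_((n * n).+1) is the homogenising coordinate t; the others form
   z = htail v. Row 0 of hom_mx is vec A⋆ and the other rows span the vectorised
   D with D x_j = D A⋆ x_j = 0, so affmx v = t A⋆ + vec_mx (z *m ker_data). *)
Definition hom_mx : 'M[R]_((n * n).+1, n * n) :=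
  \matrix_(i, j) oapp (fun i' => ker_data i' j) (mxvec Astar 0 j) (unlift ord0 i).

Definition htail (v : 'cV[R]_((n * n).+1)) : 'rV[R]_(n * n) := \row_i v (lift ord0 i) 0.

Definition hvec (z : 'rV[R]_(n * n)) : 'cV[R]_((n * n).+1) :=
  \col_i oapp (fun i' => z 0 i') 1 (unlift ord0 i).

Definition affmx (v : 'cV[R]_((n * n).+1)) : 'M[R]_n := vec_mx (v^T *m hom_mx).

Lemma hvec_1 z : hvec z ord0 0 = 1.
Proof. by rewrite mxE unlift_none. Qed.

Lemma htail_hvec z : htail (hvec z) = z.
Proof. by apply/matrixP => i j; rewrite (ord1 i) !mxE liftK. Qed.

Lemma mxvec_affmx v : mxvec (affmx v) = v ord0 0 *: mxvec Astar + htail v *m ker_data.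
Proof.
rewrite vec_mxK; apply/matrixP => i j; rewrite (ord1 i) !mxE big_ord_recl !mxE unlift_none.
congr (_ + _); apply: eq_bigr => l _.
by rewrite [v^T _ _]mxE [hom_mx _ _]mxE [htail v _ _]mxE liftK.
Qed.

Lemma affmx_sub_ker v : v ord0 0 = 1 -> (mxvec (affmx v - Astar) <= ker_data)%MS.
Proof.
move=> v_1; apply/submxP; exists (htail v).
by rewrite raddfB /= mxvec_affmx v_1 scale1r addrC addKr.
Qed.

Lemma sub_ker_affmx A : (mxvec (A - Astar) <= ker_data)%MS -> exists z, A = affmx (hvec z).
Proof.
move/submxP=> [z Az]; exists z; apply: (can_inj (@mxvecK _ n n)).
by rewrite mxvec_affmx hvec_1 scale1r htail_hvec -Az raddfB /= addrC subrK.
Qed.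

End DataSubspace.

Section UncertaintySet.
Variables (R : realType) (n k : nat) (Astar : 'M[R]_n) (xs : 'I_k -> 'cV[R]_n).
Implicit Types (q : 'M[R]_n -> R) (v : 'cV[R]_((n * n).+1)).

Lemma in_UkP q A :
  in_Uk q Astar xs A <-> q A <= 0 /\ (mxvec (A - Astar) <= ker_data Astar xs)%MS.
Proof.
rewrite mxvec_ker_data /in_Uk; split=> -[qA dataA]; split=> //.
  apply/eqP/mul_data_mx_eq0 => j; have [Ax AAx] := dataA j.
  by rewrite !mulmxBl Ax subrr -[in A *m _]Ax AAx subrr.
move/eqP/mul_data_mx_eq0: dataA => dataA j; have [Ax AAx] := dataA j.
move/eqP: Ax; rewrite mulmxBl subr_eq0 => /eqP Ax; split=> //.
by move/eqP: AAx; rewrite mulmxBl subr_eq0 -Ax => /eqP.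
Qed.

Lemma affmx_in_Uk q v : v ord0 0 = 1 -> q (affmx Astar xs v) <= 0 ->
  in_Uk q Astar xs (affmx Astar xs v).
Proof. by move=> v_1 qA; apply/in_UkP; split; last exact: affmx_sub_ker. Qed.

Lemma in_Uk_affmx q A :
  in_Uk q Astar xs A -> q A <= 0 /\ exists z, A = affmx Astar xs (hvec z).
Proof. by move/in_UkP=> [qA /sub_ker_affmx]. Qed.

Lemma Astar_in_Uk q : q Astar <= 0 -> in_Uk q Astar xs Astar.
Proof. by split. Qed.

End UncertaintySet.

Lemma quad_funE (R : realType) n (Q : 'M[R]_(n * n)) p s A :
  quad_fun Q p s A = qform Q (mxvec A)^T + (mxvec A *m p) 0 0 + s.
Proof. by rewrite /quad_fun /qform trmxK. Qed.

Lemma pos_def_qform (R : realType) m (M : 'M[R]_m) (w : 'cV[R]_m) :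
  pos_def M -> w != 0 -> 0 < qform M w.
Proof. by move=> M_pd w_n0; rewrite /qform -[w in _ *m w]trmxK M_pd ?trmx_eq0. Qed.

Lemma quad_fun_midpoint_lt (R : realType) n Q p s (A B : 'M[R]_n) : pos_def Q -> A != B ->
  quad_fun Q p s (2^-1 *: (A + B)) < 2^-1 * (quad_fun Q p s A + quad_fun Q p s B).
Proof.
move=> Q_pd AB; rewrite !quad_funE.
have -> : (mxvec (2^-1 *: (A + B)))^T = 2^-1 *: (mxvec A)^T + 2^-1 *: (mxvec B)^T.
  by rewrite !linearZ /= !linearD.
have -> : mxvec (2^-1 *: (A + B)) *m p = 2^-1 *: (mxvec A *m p + mxvec B *m p).
  by rewrite linearZ /= linearD /= -scalemxAl mulmxDl.
have : 0 < qform Q (1 *: (mxvec A)^T + (-1) *: (mxvec B)^T).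
  apply: pos_def_qform => //; rewrite scale1r scaleN1r subr_eq0.
  by apply: contra AB => /eqP/trmx_inj/(can_inj (@mxvecK _ n n)) ->.
rewrite !qform_comb !mxE; lra.
Qed.

Lemma scalar_vec_mx (R : comPzRingType) m n (L : 'rV[R]_m) (M : 'cV[R]_n) :
  scalar (fun w : 'rV[R]_(m * n) => (L *m vec_mx w *m M) 0 0).
Proof. by move=> a u w; rewrite linearP /= mulmxDr mulmxDl -scalemxAr -scalemxAl !mxE. Qed.

Lemma sum_coord (R : comPzRingType) n (L : 'rV[R]_n) (x : 'cV[R]_n) :
  \sum_i x i 0 * (L *m (delta_mx i 0 : 'cV_n)) 0 0 = (L *m x) 0 0.
Proof. by rewrite [RHS]mxE; apply: eq_bigr => i _; rewrite -colE !mxE mulrC. Qed.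

Section SplitCast.
Variables (N m1 m2 : nat) (eN : N = (m1 + m2)%N).

Definition split_cast (i : 'I_N) : 'I_m1 + 'I_m2 := split (cast_ord eN i).
Definition unsplit_cast (u : 'I_m1 + 'I_m2) : 'I_N := cast_ord (esym eN) (unsplit u).

Lemma unsplit_castK : cancel unsplit_cast split_cast.
Proof. by move=> u; rewrite /split_cast /unsplit_cast cast_ordKV unsplitK. Qed.

End SplitCast.

Lemma mul2n_split r : (2 * r = r + r)%N. Proof. by rewrite mul2n addnn. Qed.
Lemma mul3n_split r : (3 * r = r + 2 * r)%N. Proof. exact: mulSn. Qed.

Lemma psd_mx0 (R : realType) (M : 'M[R]_0) : psd M.
Proof. by split=> [|v]; [apply/matrixP => -[] | rewrite mxE big_ord0]. Qed.

Section Reformulation.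
Variables (R : realType) (n k r : nat) (Astar : 'M[R]_n) (xs : 'I_k -> 'cV[R]_n).
Variables (h : 'I_r -> 'cV[R]_n) (b : 'I_r -> R).
Variables (Q : 'M[R]_(n * n)) (p : 'cV[R]_(n * n)) (s : R) (c : 'cV[R]_n).
Hypotheses (Q_pd : pos_def Q) (Astar_U0 : quad_fun Q p s Astar <= 0).
Implicit Types (v : 'cV[R]_((n * n).+1)) (x : 'cV[R]_n) (u : 'I_r + 'I_r).

Local Notation W := (hom_mx Astar xs).
Local Notation A_ := (affmx Astar xs).
Local Notation ecol kk := (delta_mx kk 0 : 'cV[R]_n).

Definition e0 : 'cV[R]_((n * n).+1) := delta_mx ord0 0.

Lemma tr_mul_e0 v : (v^T *m e0) 0 0 = v ord0 0.
Proof. by rewrite -colE !mxE. Qed.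

Lemma tr_mul_hom_mx v : v^T *m W = mxvec (A_ v).
Proof. by rewrite vec_mxK. Qed.

Lemma trmx_hom_mx_mul v : W^T *m v = (mxvec (A_ v))^T.
Proof. by rewrite -tr_mul_hom_mx trmx_mul trmxK. Qed.

Definition hq_mx : 'M[R]_((n * n).+1) :=
  W *m Q *m W^T + W *m p *m e0^T + s *: (e0 *m e0^T).

Lemma qform_hq_mx v : qform hq_mx v =
  qform Q (mxvec (A_ v))^T + v ord0 0 * (mxvec (A_ v) *m p) 0 0 + s * v ord0 0 ^+ 2.
Proof.
rewrite !qformD qformZ qform_conj !qform_mul_tr tr_mul_e0 mulmxA tr_mul_hom_mx.
by rewrite trmx_hom_mx_mul mulrC expr2.
Qed.

Lemma qform_hq_mx_1 v : v ord0 0 = 1 -> qform hq_mx v = quad_fun Q p s (A_ v).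
Proof. by move=> v_1; rewrite qform_hq_mx quad_funE v_1 mul1r expr1n mulr1. Qed.

Lemma qform_hq_mx_ge0 v : v ord0 0 = 0 -> 0 <= qform hq_mx v.
Proof.
move=> v_0; rewrite qform_hq_mx v_0 mul0r expr0n mulr0 !addr0.
have [->|A_n0] := eqVneq (mxvec (A_ v))^T 0; first by rewrite /qform mulmx0 mxE.
exact/ltW/pos_def_qform.
Qed.

Definition slater_point v : Prop := v ord0 0 = 1 /\ qform hq_mx v < 0.

Definition step1_mx i kk : 'M[R]_((n * n).+1) :=
  - (e0 *m (W *m lin_form_col
      (fun w : 'rV[R]_(n * n) => ((h i)^T *m vec_mx w *m ecol kk) 0 0))^T).

Definition step2_mx i kk : 'M[R]_((n * n).+1) :=
  - (W *m bilin_form_mx (fun w1 w2 : 'rV[R]_(n * n) =>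
      ((h i)^T *m vec_mx w1 *m vec_mx w2 *m ecol kk) 0 0) *m W^T).

Lemma qform_step1_mx i kk v :
  qform (step1_mx i kk) v = - (v ord0 0 * ((h i)^T *m A_ v *m ecol kk) 0 0).
Proof.
rewrite qformN qform_mul_tr tr_mul_e0 mulmxA tr_mul_hom_mx.
by rewrite -(lin_form_colE (scalar_vec_mx _ _)) mxvecK.
Qed.

Lemma qform_step2_mx i kk v :
  qform (step2_mx i kk) v = - ((h i)^T *m A_ v *m A_ v *m ecol kk) 0 0.
Proof.
rewrite qformN qform_conj /qform trmx_hom_mx_mul trmxK.
rewrite -bilin_form_mxE ?mxvecK // => w a w1 w2 /=;
  by rewrite linearP /= !(mulmxDr, mulmxDl) -!(scalemxAr, scalemxAl) !mxE.
Qed.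

(* inl i stands for the constraint h_i^T A x <= b_i, inr i for h_i^T A² x <= b_i. *)
Definition cons_row u : 'I_r := match u with inl i | inr i => i end.

Definition steps_mx u (A : 'M[R]_n) : 'M[R]_n := match u with inl _ => A | inr _ => A *m A end.

Definition step_mx u kk : 'M[R]_((n * n).+1) :=
  match u with inl i => step1_mx i kk | inr i => step2_mx i kk end.

Definition cons_mx u : 'M[R]_((n * n).+1) := b (cons_row u) *: (e0 *m e0^T).

Definition robust_lmi u x : 'M[R]_((n * n).+1) :=
  symmx (cons_mx u) + \sum_kk x kk 0 *: symmx (step_mx u kk).

Lemma trmx_robust_lmi u x : (robust_lmi u x)^T = robust_lmi u x.
Proof.
rewrite /robust_lmi linearD /= linear_sum /= trmx_symmx; congr (_ + _).
by apply: eq_bigr => kk _; rewrite linearZ /= trmx_symmx.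
Qed.

Lemma qform_robust_lmi u x v : v ord0 0 = 1 ->
  qform (robust_lmi u x) v =
  b (cons_row u) - ((h (cons_row u))^T *m (steps_mx u (A_ v) *m x)) 0 0.
Proof.
move=> v_1; rewrite qformD qform_symmx /cons_mx qformZ qform_mul_tr tr_mul_e0 v_1 !mulr1.
rewrite qform_sum mulmxA -sum_coord -sumrN; congr (_ + _); apply: eq_bigr => kk _.
rewrite qformZ qform_symmx -mulrN; congr (_ * _).
by case: u => i /=; rewrite ?qform_step1_mx ?qform_step2_mx ?v_1 ?mul1r ?mulmxA.
Qed.

Definition robust_row u x : Prop :=
  forall A, in_Uk (quad_fun Q p s) Astar xs A ->
  ((h (cons_row u))^T *m (steps_mx u A *m x)) 0 0 <= b (cons_row u).

Lemma robust_feasibleP x : robust_feasible h b (quad_fun Q p s) Astar xs x <->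
  in_poly h b x /\ forall u, robust_row u x.
Proof.
split=> -[hx hA]; split=> //.
  by case=> i A /hA [h1 h2]; [exact: h1 | rewrite /= -mulmxA; exact: h2].
move=> A UA; split=> i; first exact: hA (inl i) A UA.
by have := hA (inr i) A UA; rewrite /= -mulmxA.
Qed.

Lemma robust_row_qform_ge0 u x : robust_row u x ->
  forall v, v ord0 0 = 1 -> qform hq_mx v <= 0 -> 0 <= qform (robust_lmi u x) v.
Proof.
move=> ux v v_1; rewrite qform_hq_mx_1 // qform_robust_lmi // subr_ge0 => qA.
exact: ux (affmx_in_Uk v_1 qA).
Qed.

Lemma robust_row_slemma u x v0 : slater_point v0 -> robust_row u x ->
  forall v, 0 <= qform (robust_lmi u x) v + slemma_mult (robust_lmi u x) hq_mx * qform hq_mx v.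
Proof.
move=> [v0_1 hq_v0] ux; apply: (slemma _ hq_v0).
exact: (slemma_homogenize (m := n * n) (robust_row_qform_ge0 ux)
  (fun v => qform_hq_mx_ge0 (v := v)) v0_1 hq_v0).
Qed.

Lemma slemma_cert_robust_row u x (l : R) : 0 <= l ->
  (forall v, 0 <= qform (robust_lmi u x) v + l * qform hq_mx v) -> robust_row u x.
Proof.
move=> l_ge0 lmi A /in_Uk_affmx [qA [z Az]]; rewrite Az in qA *.
have := lmi (hvec z); rewrite qform_hq_mx_1 ?hvec_1 // qform_robust_lmi ?hvec_1 //.
have : l * quad_fun Q p s (A_ (hvec z)) <= 0 by exact: mulr_ge0_le0.
lra.
Qed.

Lemma affmx_hvec_half z : A_ (hvec (2^-1 *: z)) = 2^-1 *: (A_ (hvec z) + Astar).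
Proof.
apply: (can_inj (@mxvecK _ n n)); rewrite linearZ /= linearD /= !mxvec_affmx.
rewrite !hvec_1 !htail_hvec !scale1r -scalemxAl.
set a := mxvec Astar; set d := z *m _.
by apply/matrixP => i j; rewrite !mxE; field.
Qed.

Lemma Uk_eq_Astar A : ~ (exists v, slater_point v) ->
  in_Uk (quad_fun Q p s) Astar xs A -> A = Astar.
Proof.
move=> no_slater /in_Uk_affmx [qA [z Az]]; apply/eqP/negPn/negP => A_neq.
have mid_lt := quad_fun_midpoint_lt p s Q_pd A_neq.
apply: no_slater; exists (hvec (2^-1 *: z)); split; first exact: hvec_1.
rewrite qform_hq_mx_1 ?hvec_1 // affmx_hvec_half -Az; apply: lt_le_trans mid_lt _.
by rewrite pmulr_rle0 ?invr_gt0 ?ltr0n // -oppr_ge0 opprD addr_ge0 ?oppr_ge0.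
Qed.

Local Notation ineq_index := (split_cast (mul3n_split r)).
Local Notation lmi_index := (split_cast (mul2n_split r)).
Local Notation ineq_of := (unsplit_cast (mul3n_split r)).
Local Notation lmi_of := (unsplit_cast (mul2n_split r)).

Definition slater_sdp : SDP R n (3 * r) (2 * r) :=
  @Build_SDP R n (3 * r) (2 * r) (2 * r) (fun _ => (n * n).+1)
    (fun i => if ineq_index i is inl i' then (h i')^T else 0)
    (fun i => if ineq_index i is inr j then - delta_mx 0 j else 0)
    (fun i => if ineq_index i is inl i' then b i' else 0)
    (fun j => symmx (cons_mx (lmi_index j)))
    (fun j kk => symmx (step_mx (lmi_index j) kk))
    (fun j l => if l == j then symmx hq_mx else 0)
    c^T 0.

Lemma slater_sdp_ineqE i x (y : 'cV[R]_(sdp_N slater_sdp)) :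
  ((sdp_ax slater_sdp i *m x) 0 0 + (sdp_ay slater_sdp i *m y) 0 0 <= sdp_e slater_sdp i) =
  match ineq_index i with inl i' => ((h i')^T *m x) 0 0 <= b i' | inr j => 0 <= y j 0 end.
Proof.
rewrite /=; case: (ineq_index i) => [i'|j]; rewrite mul0mx.
  by rewrite [X in _ + X]mxE addr0.
by rewrite mulNmx -rowE !mxE add0r oppr_le0.
Qed.

Lemma sdp_lmi_slater j x y :
  sdp_lmi (P := slater_sdp) j x y = robust_lmi (lmi_index j) x + y j 0 *: symmx hq_mx.
Proof.
rewrite /sdp_lmi /robust_lmi /=; congr (_ + _).
by rewrite (bigD1 j) //= eqxx big1 ?addr0 // => l /negbTE ->; rewrite scaler0.
Qed.

Lemma slater_sdpP v0 : slater_point v0 ->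
  sdp_reformulates slater_sdp c (robust_feasible h b (quad_fun Q p s) Astar xs).
Proof.
move=> v0_slater; do 2!split=> //; move=> x; rewrite robust_feasibleP.
split=> [[x_in ux] | [y [y_ineq y_lmi]]].
- exists (\col_j slemma_mult (robust_lmi (lmi_index j) x) hq_mx); split=> [i | j].
    rewrite slater_sdp_ineqE; case: (ineq_index i) => [i'|j]; first exact: x_in.
    by rewrite mxE slemma_mult_ge0.
  rewrite /psd sdp_lmi_slater linearD /= linearZ /= trmx_robust_lmi trmx_symmx; split=> // v.
  rewrite -/(qform _ v) qformD qformZ qform_symmx mxE.
  exact: (robust_row_slemma v0_slater (ux _)).
- split=> [i | u].
    by have := y_ineq (ineq_of (inl i)); rewrite slater_sdp_ineqE unsplit_castK.
  apply: (@slemma_cert_robust_row _ _ (y (lmi_of u) 0)).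
    by have := y_ineq (ineq_of (inr (lmi_of u))); rewrite slater_sdp_ineqE unsplit_castK.
  move=> v; have := (y_lmi (lmi_of u)).2 v.
  by rewrite -/(qform _ v) sdp_lmi_slater unsplit_castK qformD qformZ qform_symmx.
Qed.

(* No auxiliary variable, and all 2r LMIs have size 0, hence hold trivially. *)
Definition linear_sdp : SDP R n (3 * r) (2 * r) :=
  @Build_SDP R n (3 * r) (2 * r) 0 (fun _ => 0%N)
    (fun i => match ineq_index i with
              | inl i' => (h i')^T
              | inr j => (h (cons_row (lmi_index j)))^T *m steps_mx (lmi_index j) Astar end)
    (fun _ => 0)
    (fun i => match ineq_index i with inl i' => b i' | inr j => b (cons_row (lmi_index j)) end)
    (fun _ => 0) (fun _ _ => 0) (fun _ _ => 0)
    c^T 0.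

Lemma linear_sdp_ineqE i x (y : 'cV[R]_(sdp_N linear_sdp)) :
  ((sdp_ax linear_sdp i *m x) 0 0 + (sdp_ay linear_sdp i *m y) 0 0 <= sdp_e linear_sdp i) =
  match ineq_index i with
  | inl i' => ((h i')^T *m x) 0 0 <= b i'
  | inr j => ((h (cons_row (lmi_index j)))^T *m (steps_mx (lmi_index j) Astar *m x)) 0 0
             <= b (cons_row (lmi_index j))
  end.
Proof.
by rewrite /= mul0mx [X in _ + X]mxE addr0; case: (ineq_index i) => [//|j]; rewrite mulmxA.
Qed.

Lemma linear_sdpP : ~ (exists v, slater_point v) ->
  sdp_reformulates linear_sdp c (robust_feasible h b (quad_fun Q p s) Astar xs).
Proof.
move=> no_slater; do 2!split=> //; move=> x; rewrite robust_feasibleP.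
have Uk_Astar A : in_Uk (quad_fun Q p s) Astar xs A -> A = Astar by exact: Uk_eq_Astar.
split=> [[x_in ux] | [y [y_ineq _]]].
- exists 0; split=> [i | j]; last exact: psd_mx0.
  rewrite linear_sdp_ineqE; case: (ineq_index i) => [i'|j]; first exact: x_in.
  exact: ux (Astar_in_Uk _ Astar_U0).
- split=> [i | u A /Uk_Astar ->].
    by have := y_ineq (ineq_of (inl i)); rewrite linear_sdp_ineqE unsplit_castK.
  by have := y_ineq (ineq_of (inr (lmi_of u))); rewrite linear_sdp_ineqE !unsplit_castK.
Qed.

End Reformulation.

Theorem theorem9 (R : realType) (n r k : nat)
    (h : 'I_r -> 'cV[R]_n) (b : 'I_r -> R)
    (Q : 'M[R]_(n * n)) (p : 'cV[R]_(n * n)) (s : R)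
    (hQ : pos_def Q)
    (Astar : 'M[R]_n) (hAstar : quad_fun Q p s Astar <= 0)
    (xs : 'I_k -> 'cV[R]_n) (c : 'cV[R]_n) :
  exists P : SDP R n (3 * r) (2 * r),
    (forall j : 'I_(2 * r), (sdp_m P j <= n * n + 1)%N) /\
    sdp_reformulates P c
      (robust_feasible h b (quad_fun Q p s) Astar xs).
Proof.
have [[v0 v0_slater] | no_slater] := pselect (exists v, slater_point Astar xs Q p s v).
  exists (slater_sdp Astar xs h b Q p s c); split; first by move=> j; rewrite addn1.
  exact: (slater_sdpP h b c hQ v0_slater).
by exists (linear_sdp Astar h b c); split; last exact: (linear_sdpP h b c hQ hAstar no_slater).
Qed.
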